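(* Let $R$ be a $\mathbb{G}$-stopping time and $[R]=\{(t,\omega)\in\mathbb{R}_+\times\Omega: t=R(\omega)\}$ its graph. Then $[R]\in\mathcal{L}^o$ if and only if $$\{R<\infty\}\cap\mathcal{G}_R=\{R<\infty\}\cap\big(\mathcal{N}\vee\sigma(\tau\nmid R)\vee\mathcal{F}_R\big).$$
   Context: Let $(\Omega,\mathcal{A},\mathbb{Q})$ be a probability space with a right-continuous filtration $\mathbb{F}=(\mathcal{F}_t)_{t\ge0}$ such that $\mathcal{F}_0$ contains $\mathcal{N}^{\mathcal{F}_\infty}$, where for a $\sigma$-algebra $\mathcal{T}\subset\mathcal{A}$, $\mathcal{N}^{\mathcal{T}}$ denotes the $\sigma$-algebra generated by all subsets of $\mathcal{T}$-measurable $\mathbb{Q}$-null sets. Let $\tau$ be a random variable with values in $[0,\infty]$, let $\mathcal{N}=\mathcal{N}^{\sigma(\tau)\vee\mathcal{F}_\infty}$, and let $\mathbb{G}=(\mathcal{G}_t)_{t\ge0}$ with $\mathcal{G}_t=\mathcal{N}\vee\bigcap_{s>t}(\mathcal{F}_s\vee\sigma(\tau\wedge s))$. Identities are understood up to $\mathcal{N}$-measurable $\mathbb{Q}$-null sets. For a function $Y''$ on $[0,\infty]\times(\mathbb{R}_+\times\Omega)$, $Y''(\tau)$ denotes $(t,\omega)\mapsto Y''(\tau(\omega),t,\omega)$. A $\mathbb{G}$-optional process $Y$ satisfies the optional splitting formula on a $\mathbb{G}$-optional set $A$ if there exist $Y'\in\mathcal{O}(\mathbb{F})$ and a $\mathcal{B}[0,\infty]\otimes\mathcal{O}(\mathbb{F})$-measurable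 $Y''$ with $Y\mathbf{1}_A=(Y'\mathbf{1}_{[0,\tau)}+Y''(\tau)\mathbf{1}_{[\tau,\infty)})\mathbf{1}_A$; $\mathcal{L}^o$ is the family of $\mathbb{G}$-optional sets on which every $\mathbb{G}$-optional process satisfies it. For a random time $R$, $\mathcal{F}_R=\sigma\{X_R\mathbf{1}_{\{R<\infty\}}: X\ \mathbb{F}\text{-optional}\}$. For $a,b\in[0,\infty]$, $a\nmid b=a$ if $a\le b$ and $=\infty$ if $a>b$ (so $\tau\nmid R$ is the random variable $\omega\mapsto\tau(\omega)\nmid R(\omega)$). For a set $D\subset\Omega$ and a $\sigma$-algebra $\mathcal{T}$, $D\cap\mathcal{T}=\{D\cap B: B\in\mathcal{T}\}$. *)

From HB Require Import structures.
From mathcomp Require Import all_boot all_order all_algebra.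
From mathcomp Require Import all_classical all_reals all_analysis.
From mathcomp Require Import measurable_realfun.
Set Implicit Arguments. Unset Strict Implicit. Unset Printing Implicit Defensive.
Import Order.TTheory GRing.Theory Num.Theory.
Import numFieldNormedType.Exports.
Local Open Scope classical_set_scope.
Local Open Scope ring_scope.

Section Defs.
Context {R : realType} {Omega : Type}.

Definition sjoin (A B : set_system Omega) : set_system Omega := <<s A `|` B >>.

Definition sigma_rv (f : Omega -> \bar R) : set_system Omega :=
  <<s [set f @^-1` B | B in [set B : set (\bar R) | measurable B]] >>.

Definition sigma_fam (P : (Omega -> R) -> Prop) : set_system Omega :=
  <<s [set E | exists f B, P f /\ measurable (B : set R) /\ E = f @^-1` B] >>.

Definition negl_sys (Q : set Omega -> \bar R) (T : set_system Omega)
  : set_system Omega :=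
  <<s [set E | exists B, T B /\ Q B = 0%E /\ E `<=` B] >>.

Definition sys_inf (F : R -> set_system Omega) : set_system Omega :=
  <<s \bigcup_(t in [set t : R | 0 <= t]) F t >>.

Definition Dom : set (R * Omega) := [set p | 0 <= p.1].

Definition meas_wrt {U : Type} (D : set U) (S : set_system U) (f : U -> R) :=
  forall B : set R, measurable B -> S (D `&` f @^-1` B).

Definition cadlag (X : R * Omega -> R) : Prop :=
  forall w : Omega,
    (forall t : R, 0 <= t -> (fun s => X (s, w)) @ t^'+ --> X (t, w)) /\
    (forall t : R, 0 < t -> exists l : R, (fun s => X (s, w)) @ t^'- --> l).

Definition adapted (F : R -> set_system Omega) (X : R * Omega -> R) : Prop :=
  forall t : R, 0 <= t -> forall B : set R, measurable B ->
    F t ((fun w => X (t, w)) @^-1` B).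

Definition optional (F : R -> set_system Omega) : set_system (R * Omega) :=
  <<s Dom, [set E | exists X B, cadlag X /\ adapted F X /\
                      measurable (B : set R) /\ E = Dom `&` X @^-1` B] >>.

Definition Dom2 : set (\bar R * (R * Omega)) :=
  [set x | (0 <= x.1)%E /\ 0 <= x.2.1].

Definition prod_sys (S : set_system (R * Omega))
  : set_system (\bar R * (R * Omega)) :=
  <<s Dom2, [set E | exists (A : set (\bar R)) B, measurable A /\
          A `<=` [set x | (0 <= x)%E] /\ S B /\ E = A `*` B] >> .

Section Model.
Variables (Q : set Omega -> \bar R) (F : R -> set_system Omega)
          (tau : Omega -> \bar R).

Definition sigma_tau_Finf : set_system Omega :=
  sjoin (sigma_rv tau) (sys_inf F).
Definition Nsys : set_system Omega := negl_sys Q sigma_tau_Finf.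

Definition Gfilt (t : R) : set_system Omega :=
  sjoin Nsys (\bigcap_(s in [set s : R | t < s])
                 sjoin (F s) (sigma_rv (fun w => Order.min (tau w) s%:E))).

(* E is contained in an N-measurable Q-null set; equivalently in a
   (sigma(tau) \/ F_oo)-measurable Q-null set *)
Definition Nnull (E : set Omega) : Prop :=
  exists B, sigma_tau_Finf B /\ Q B = 0%E /\ E `<=` B.

Definition osf (Y : R * Omega -> R) (A : set (R * Omega)) : Prop :=
  exists (Y' : R * Omega -> R) (Y'' : \bar R * (R * Omega) -> R),
    meas_wrt Dom (optional F) Y' /\
    meas_wrt Dom2 (prod_sys (optional F)) Y'' /\
    Nnull [set w | exists t : R, A (t, w) /\
       Y (t, w) <> (if (t%:E < tau w)%E then Y' (t, w)
                    else Y'' (tau w, (t, w)))].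

Definition Lo (A : set (R * Omega)) : Prop :=
  optional Gfilt A /\ A `<=` Dom /\
  forall Y : R * Omega -> R, meas_wrt Dom (optional Gfilt) Y -> osf Y A.

Definition stopping_time (H : R -> set_system Omega) (S : Omega -> \bar R) :=
  (forall w, (0 <= S w)%E) /\
  forall t : R, 0 <= t -> H t [set w | (S w <= t%:E)%E].

Definition sys_at_stop (H : R -> set_system Omega) (S : Omega -> \bar R)
  : set_system Omega :=
  [set A | sys_inf H A /\
     forall t : R, 0 <= t -> H t (A `&` [set w | (S w <= t%:E)%E])].

Definition F_at (S : Omega -> \bar R) : set_system Omega :=
  sigma_fam (fun f => exists X : R * Omega -> R,
     meas_wrt Dom (optional F) X /\
     f = (fun w => if (S w < +oo)%E then X (fine (S w), w) else 0)).

Definition tau_nmid (S : Omega -> \bar R) : Omega -> \bar R :=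
  fun w => if (tau w <= S w)%E then tau w else +oo%E.

End Model.

Definition graph (S : Omega -> \bar R) : set (R * Omega) :=
  [set p | 0 <= p.1 /\ p.1%:E = S p.2].

Definition trace (D : set Omega) (T : set_system Omega) : set_system Omega :=
  [set D `&` B | B in T].

End Defs.

(* Let D = {S < +oo}. For an F-optional set A' and a B[0,oo] (x) O(F)-measurable
   set A'', read the right-hand side of the optional splitting formula of their
   indicators at time S: A' at (S, w) on {S < tau}, A'' at (tau, S, w) on
   {tau <= S}. Call C split-representable if on D, outside an N-null set, C is
   such a reading. Both sides of the theorem are equivalent to: every set of G_S
   is split-representable.
   - Split-representable sets form a sigma-algebra containing N, sigma(tau -/ S)
     and F_S (on D, tau -/ S is +oo on {S < tau} and tau on {tau <= S}), and,
     conversely, each of them agrees on D with a set of N \/ sigma(tau -/ S) \/ F_S.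
     As N \/ sigma(tau -/ S) \/ F_S is always contained in G_S (an optional
     process read at S is G_S-measurable, by approximating S from the right on
     finer and finer grids), the trace equality is equivalent to
     representability.
   - If [S] is in L^o, the splitting formula for the indicator of [S] x A, read at
     t = S, represents A in G_S. Conversely, representing the sets {Y_S < q}, q
     rational, for a G-optional Y yields Y' and Y'' as infima over q. *)

From HB Require Import structures.
From mathcomp Require Import all_boot all_order all_algebra.
From mathcomp Require Import all_classical all_reals all_analysis.
From mathcomp Require Import measurable_realfun.
From mathcomp Require Import lra.
Set Implicit Arguments. Unset Strict Implicit. Unset Printing Implicit Defensive.
Import numFieldNormedType.Exports.
Import Order.TTheory GRing.Theory Num.Theory.
Local Open Scope classical_set_scope.
Local Open Scope ring_scope.

Section SigmaAlgebraFacts.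
Variables (T : Type) (U : set T) (M : set_system T).
Hypothesis hM : sigma_algebra U M.

Lemma salg0 : M set0. Proof. by case: hM. Qed.

Lemma salgCD A : M A -> M (U `\` A). Proof. by case: hM => _ + _; apply. Qed.

Lemma salg_bigcup (A : (set T)^nat) : (forall n, M (A n)) -> M (\bigcup_n A n).
Proof. by case: hM => _ _; apply. Qed.

Lemma salgT : M U. Proof. by rewrite -(setD0 U); apply/salgCD/salg0. Qed.

Lemma salgU A B : M A -> M B -> M (A `|` B).
Proof. by move=> MA MB; rewrite -bigcup2E; apply: salg_bigcup => -[|[|]] //= _; apply: salg0. Qed.

Lemma salgIU A : M A -> M (U `&` A).
Proof. by move=> MA; rewrite -(setDD U A); apply/salgCD/salgCD. Qed.

Lemma salgI A B : A `<=` U -> M A -> M B -> M (A `&` B).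
Proof.
move=> AU MA MB; have -> : A `&` B = U `\` ((U `\` A) `|` (U `\` B)).
  by rewrite setDUr !setDD setIACA setIid setIA (setIidr AU).
by apply/salgCD/salgU; apply: salgCD.
Qed.

Lemma salgD A B : A `<=` U -> M A -> M B -> M (A `\` B).
Proof.
move=> AU MA MB; have -> : A `\` B = A `&` (U `\` B).
  by apply/seteqP; split=> x [Ax Bx]; split=> //; [split=> //; exact: AU | case: Bx].
by apply: salgI => //; apply: salgCD.
Qed.

Lemma salg_bigcap (A : (set T)^nat) : (forall n, M (A n)) -> M (U `&` \bigcap_n A n).
Proof.
move=> MA; have -> : U `&` \bigcap_n A n = U `\` \bigcup_n (U `\` A n).
  apply/seteqP; split=> x [Ux Ax]; split=> //.
    by move=> [n _ []]; move: (Ax n I).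
  by move=> n _; apply: contrapT => nAx; apply: Ax; exists n.
by apply/salgCD/salg_bigcup => n; apply: salgCD.
Qed.

End SigmaAlgebraFacts.

Lemma salg_restrict (T : Type) (M : set_system T) (P : set T) :
  sigma_algebra setT M -> M P -> sigma_algebra P M.
Proof.
move=> hM MP; split; first exact: salg0 hM.
  move=> A MA; have -> : P `\` A = P `&` (setT `\` A) by rewrite setTD setDE.
  by apply: (salgI hM) => //; apply: salgCD.
exact: salg_bigcup hM.
Qed.

Lemma salg_traced (T : Type) (U : set T) (M : set_system T) :
  sigma_algebra U M -> sigma_algebra setT [set A | M (U `&` A)].
Proof.
move=> hM; split=> /=.
- by rewrite setI0; exact: salg0 hM.
- move=> A MA; have -> : U `&` (setT `\` A) = U `\` (U `&` A).
    by rewrite setDIr setDv set0U setTD setDE.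
  exact: salgCD.
- by move=> A MA; rewrite setI_bigcupr; exact: (salg_bigcup hM).
Qed.

Lemma salg_cst (T : Type) (M : set_system T) (P : Prop) :
  sigma_algebra setT M -> M [set _ | P].
Proof.
move=> hM; have [p|np] := pselect P.
  by rewrite (_ : [set _ | P] = setT); [exact: salgT hM | by apply/seteqP; split].
by rewrite (_ : [set _ | P] = set0); [exact: salg0 hM | by apply/seteqP; split].
Qed.

Section RealValued.
Variable R : realType.

Lemma meas_wrt_of_rays (T : Type) (P : set T) (M : set_system T) (g : T -> R) :
  sigma_algebra P M -> (forall a : R, M (P `&` g @^-1` `]-oo, a[)) ->
  meas_wrt P M g.
Proof.
move=> hM Mray B mB.
have : (fun X : set_system R => X B) ((@ocitv R).-sigma.-measurable) by exact: mB.
rewrite RGenInftyO.measurableE => /= GB.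
suff sub : <<s @RGenInftyO.G R >> `<=` [set B | M (P `&` g @^-1` B)] by exact: sub GB.
apply: smallest_sub; last by move=> A [x ->]; apply: Mray.
split=> /=.
- by rewrite preimage_set0 setI0; exact: salg0 hM.
- move=> A MA; have -> : P `&` g @^-1` (setT `\` A) = P `\` (P `&` g @^-1` A).
    by rewrite setDIr setDv set0U setTD preimage_setC setDE.
  exact: (salgCD hM).
- by move=> A MA; rewrite preimage_bigcup setI_bigcupr; exact: (salg_bigcup hM).
Qed.

Lemma meas_wrt_indic (T : Type) (U : set T) (M : set_system T) (E : set T) :
  sigma_algebra U M -> M E -> meas_wrt U M (fun p => if `[< E p >] then 1 else 0 : R).
Proof.
move=> hM ME B mB; pose M' := [set A | M (U `&` A)].
have hM' : sigma_algebra setT M' := salg_traced hM.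
have ME' : M' E by apply: salgIU.
rewrite -[M _]/(M' _).
rewrite (_ : _ @^-1` _ = (E `&` [set _ | B 1]) `|` (~` E `&` [set _ | B 0])).
  apply: (salgU hM'); apply: (salgI hM') => //; try exact: salg_cst hM'.
  by rewrite -setTD; apply: (salgCD hM').
apply/seteqP; split=> p /=.
  by case: (pselect (E p)) => h; [rewrite asboolT //; left | rewrite asboolF //; right].
by move=> [[Ep B1]|[nEp B0]]; [rewrite asboolT | rewrite asboolF].
Qed.

Lemma exists_inv_succ_lt (e : R) : 0 < e -> exists m : nat, (m.+1%:R)^-1 < e.
Proof.
move=> e0; exists (Num.truncn e^-1).
by rewrite invf_plt ?posrE ?ltr0Sn //; apply: truncnS_gt.
Qed.

Lemma inv_succ_le (n m : nat) : (n <= m)%N -> (m.+1%:R)^-1 <= (n.+1%:R)^-1 :> R.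
Proof. by move=> nm; rewrite lef_pV2 ?posrE ?ltr0Sn // ler_nat ltnS. Qed.

Lemma truncn_grid (s : R) (n j : nat) : 0 <= s ->
  ((n.+1%:R)^-1 * j%:R <= s) && (s < (n.+1%:R)^-1 * j.+1%:R) =
  (Num.truncn (n.+1%:R * s) == j).
Proof.
move=> s0; rewrite truncn_eq ?mulr_ge0 // ler_pdivrMl ?ltr0Sn //.
by rewrite ltr_pdivlMl ?ltr0Sn.
Qed.

Lemma cvg_at_right_ball (f : R -> R) (s : R) : f @ s^'+ --> f s ->
  forall e, 0 < e -> exists2 del, 0 < del &
    forall r, s < r -> r < s + del -> `|f s - f r| < e.
Proof.
move=> /cvgrPdist_lt fs e e0; have /nbhs_ballP[del del0 sdel] := fs e e0.
exists del => // r sr rs; apply: (sdel r) => //=.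
by rewrite -ball_normE /= distrC ger0_norm ?subr_ge0 ?(ltW sr) // ltrBlDl.
Qed.

Definition step (r : \bar R) (s : R) : R := if (r <= s%:E)%E then 1 else 0.

Lemma step_cvg_right (r : \bar R) (t : R) : step r @ t^'+ --> step r t.
Proof.
apply: cvg_near_cst; rewrite /step.
have [rt|tr] := leP r t%:E.
  apply/nbhs_ballP; exists 1 => //= s _ ts.
  by rewrite (le_trans rt) // lee_fin ltW.
have [->|ry] := eqVneq r +oo%E.
  by apply/nbhs_ballP; exists 1 => //= s _ ts; rewrite leNgt ltry.
have rf : r \is a fin_num.
  by rewrite fin_numE ry andbT; apply: contraTneq tr => ->; rewrite ltNge leNye.
apply/nbhs_ballP; exists (fine r - t) => /=; first by rewrite subr_gt0 -lte_fin fineK.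
move=> s + ts; rewrite leNgt -(fineK rf) lte_fin.
by rewrite -ball_normE /= distrC ger0_norm ?subr_ge0 ?(ltW ts) // ltrBlDl addrC subrK => ->.
Qed.

Lemma step_cvg_left (r : \bar R) (t : R) : 0 < t -> exists l : R, step r @ t^'- --> l.
Proof.
move=> t0; exists (if (r < t%:E)%E then 1 else 0); apply: cvg_near_cst; rewrite /step.
have [rt|tr] := ltP r t%:E; last first.
  apply/nbhs_ballP; exists 1 => //= s _ st.
  by rewrite leNgt (lt_le_trans _ tr) // lte_fin.
have [->|rN] := eqVneq r -oo%E.
  by apply/nbhs_ballP; exists 1 => //= s _ ts; rewrite leNye.
have rf : r \is a fin_num.
  by rewrite fin_numE rN /=; apply: contraTneq rt => ->; rewrite ltNge leey.
apply/nbhs_ballP; exists (t - fine r) => /=; first by rewrite subr_gt0 -lte_fin fineK.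
move=> s + st; rewrite -(fineK rf) lee_fin.
rewrite -ball_normE /= ger0_norm ?subr_ge0 ?(ltW st) //.
by move: (fine r) => x ts; have -> // : x <= s by lra.
Qed.

Definition rat_enum (k : nat) : R := ratr (odflt 0%Q (@pickle_inv rat k)).

Lemma rat_enum_dense (x y : R) : x < y -> exists k, x < rat_enum k < y.
Proof.
move=> xy; have [q qxy] := rat_in_itvoo xy; exists (pickle q).
by rewrite /rat_enum pickleK_inv /=; move: qxy; rewrite in_itv.
Qed.

Section RatInf.
Variables (T : Type) (E : nat -> set T).

Definition rat_inf (p : T) : \bar R :=
  ereal_inf [set (rat_enum k)%:E | k in [set k | E k p]].

Lemma rat_inf_lt p a : (rat_inf p < a%:E)%E <-> exists k, E k p /\ rat_enum k < a.
Proof.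
split; first by move=> /ereal_inf_lt[_ [k Ek <-]]; rewrite lte_fin; exists k.
move=> [k [Ek ka]]; apply: le_lt_trans (ereal_inf_lbound _) _; first by exists k.
by rewrite lte_fin.
Qed.

Lemma rat_inf_eqy p : rat_inf p = +oo%E <-> ~ exists k, E k p.
Proof.
split=> [infp [k Ek]|nE].
  have : (rat_inf p <= (rat_enum k)%:E)%E by apply: ereal_inf_lbound; exists k.
  by rewrite infp leNgt ltry.
rewrite /rat_inf (_ : [set _ | k in _] = set0) ?ereal_inf0 //.
by apply/seteqP; split=> x // [k Ek _]; apply: nE; exists k.
Qed.

Lemma rat_inf_eqNy p : rat_inf p = -oo%E <-> forall m : nat, (rat_inf p < (- m%:R)%:E)%E.
Proof.
split=> [-> m|infp]; first exact: ltNyr.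
case infpE: (rat_inf p) => [r| |] //; last by have := infp 0%N; rewrite infpE.
have := infp (Num.truncn `|r|).+1; rewrite infpE lte_fin => rlt; exfalso.
have := truncnS_gt `|r|; have : - r <= `|r| by rewrite -normrN ler_norm.
by clear infp infpE; lra.
Qed.

Lemma rat_inf_eq p (y : R) : (forall k, E k p <-> y < rat_enum k) -> rat_inf p = y%:E.
Proof.
move=> Ey; apply/eqP; rewrite eq_le; apply/andP; split.
  apply/lee_addgt0Pr => e e0.
  have ye : y < y + e by rewrite ltrDl.
  have [k /andP[yk ke]] := rat_enum_dense ye.
  apply: le_trans (ereal_inf_lbound _) _; first by exists k => //; apply/Ey.
  by rewrite -EFinD lee_fin ltW.
by apply/ereal_infP => _ [k Ek <-]; rewrite lee_fin ltW //; apply/Ey.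
Qed.

Lemma meas_wrt_rat_inf (U : set T) (M : set_system T) :
  sigma_algebra U M -> (forall k, M (E k)) -> meas_wrt U M (fine \o rat_inf).
Proof.
move=> hM ME; pose M' := [set A | M (U `&` A)].
have hM' : sigma_algebra setT M' := salg_traced hM.
have ME' k : M' (E k) by apply: salgIU.
pose L a := \bigcup_k (E k `&` [set _ | rat_enum k < a]).
have ML a : M' (L a).
  by apply: (salg_bigcup hM') => k; apply: (salgI hM') => //; apply: salg_cst.
have LE p a : (rat_inf p < a%:E)%E <-> L a p.
  by rewrite rat_inf_lt; split=> [[k []]|[k _ []]]; exists k.
pose Ninf := \bigcap_m L (- m%:R); pose Pinf := setT `\` \bigcup_k E k.
have MNinf : M' Ninf by rewrite -(setTI Ninf); apply: (salg_bigcap hM').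
have MPinf : M' Pinf by apply: (salgCD hM'); apply: (salg_bigcup hM').
have NinfE p : rat_inf p = -oo%E <-> Ninf p.
  by rewrite rat_inf_eqNy; split=> h m; [move=> _; apply/LE | apply/LE/h].
have PinfE p : rat_inf p = +oo%E <-> Pinf p.
  rewrite rat_inf_eqy; split=> [nE|[_ nE] [k Ek]]; last by apply: nE; exists k.
  by split=> // -[k _ Ek]; apply: nE; exists k.
(* [fine] sends both infinite values of [rat_inf] to [0]. *)
apply: (meas_wrt_of_rays hM) => a; rewrite -[M _]/(M' _).
rewrite (_ : _ @^-1` _ = (L a `\` Ninf) `|` ([set _ | 0 < a] `&` (Ninf `|` Pinf))).
  apply: (salgU hM'); first exact: (salgD hM').
  by apply: (salgI hM') => //; [apply: salg_cst | apply: (salgU hM')].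
apply/seteqP; split=> p; rewrite /preimage /= in_itv /=;
  case infp: (rat_inf p) => [r| |] /=.
- move=> ra; left; split; first by apply/LE; rewrite infp lte_fin.
  by move/NinfE; rewrite infp.
- by move=> a0; right; split => //; right; apply/PinfE.
- by move=> a0; right; split => //; left; apply/NinfE.
- by move=> [[/LE + _]|[_ [/NinfE|/PinfE]]]; rewrite ?infp ?lte_fin.
- by move=> [[/LE + _]|[]]; rewrite ?infp.
- by move=> [[_ /NinfE]|[]]; rewrite ?infp.
Qed.

End RatInf.

Lemma lt_approxP (u : nat -> R) (l a : R) :
  (forall e, 0 < e -> exists N, forall n, (N <= n)%N -> `|l - u n| < e) ->
  l < a <-> exists k N, forall n, u (n + N)%N < a - (k.+1%:R)^-1.
Proof.
move=> ul; split=> [la|[k [N uN]]].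
  have e0 : 0 < (a - l) / 2 by rewrite divr_gt0 // subr_gt0.
  have [k ke] := exists_inv_succ_lt e0; have [N uN] := ul _ e0.
  exists k, N => n; have := uN (n + N)%N (leq_addl _ _).
  rewrite ltr_norml => /andP[+ _]; move: ke.
  by move: (k.+1%:R)^-1 (u (n + N)%N) => i x; lra.
have k0 : 0 < (k.+1%:R)^-1 :> R by rewrite invr_gt0 ltr0Sn.
have [N' uN'] := ul _ k0; have := uN' (N' + N)%N (leq_addr _ _).
rewrite ltr_norml => /andP[_ +]; move: (uN N').
by move: (k.+1%:R)^-1 (u (N' + N)%N) => i x; lra.
Qed.

Lemma ereal_eq_leP (x : \bar R) (t : R) :
  x = t%:E <-> (x <= t%:E)%E /\ ~ exists m : nat, (x + ((m.+1%:R)^-1)%:E <= t%:E)%E.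
Proof.
have inv_gt0 m : 0 < (m.+1%:R)^-1 :> R by rewrite invr_gt0 ltr0Sn.
case: x => [r| |] /=; split=> //.
- case=> <-; split=> [|[m]]; first exact: lexx.
  by rewrite -EFinD lee_fin gerDl leNgt inv_gt0.
- move=> [+ nm]; rewrite lee_fin le_eqVlt => /predU1P[-> //|rt].
  have /exists_inv_succ_lt[m mgap] : 0 < t - r by rewrite subr_gt0.
  by exfalso; apply: nm; exists m; rewrite -EFinD lee_fin -lerBrDl ltW.
- by move=> []; rewrite leNgt ltry.
- by move=> [_ nm]; exfalso; apply: nm; exists 0%N; rewrite addNye leNye.
Qed.

Lemma lty_le_nat (x : \bar R) :
  (x < +oo)%E -> exists n : nat, (x <= n%:R%:E)%E.
Proof.
case: x => [r _| //|_]; last by exists 0%N; rewrite leNye.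
by exists (Num.truncn r).+1; rewrite lee_fin ltW // truncnS_gt.
Qed.

Lemma setT_bigcup_le_nat (T : Type) (f : T -> \bar R) :
  setT `\` \bigcup_n [set w | (f w <= n%:R%:E)%E] = [set w | f w = +oo%E].
Proof.
apply/seteqP; split=> w /=.
  move=> [_ nle]; apply/eqP; rewrite -leye_eq leNgt; apply/negP => /lty_le_nat[n fn].
  by apply: nle; exists n.
by move=> fw; split=> // -[n _ /=]; rewrite fw leNgt ltry.
Qed.

End RealValued.

Section Model.
Variables (R : realType) (d : measure_display) (Omega : measurableType d)
  (Q : probability Omega R) (F : R -> set_system Omega) (tau S : Omega -> \bar R).
Hypothesis hF_meas : forall t : R, 0 <= t -> F t `<=` measurable.
Hypothesis hF_mono : forall s t : R, 0 <= s -> s <= t -> F s `<=` F t.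
Hypothesis htau_ge0 : forall w, (0 <= tau w)%E.
Hypothesis htau_meas : measurable_fun setT tau.
Hypothesis hS : stopping_time (Gfilt Q F tau) S.

Local Notation G := (Gfilt Q F tau).
Local Notation GS := (sys_at_stop G S).
Local Notation D := [set w | (S w < +oo)%E].
Local Notation RHS := (sjoin (sjoin (Nsys Q F tau) (sigma_rv (tau_nmid tau S))) (F_at F S)).

Lemma Gfilt_salg t : sigma_algebra setT (G t).
Proof. exact: smallest_sigma_algebra. Qed.

Lemma Nsys_sub_Gfilt t : Nsys Q F tau `<=` G t.
Proof. by move=> A NA; apply: sub_sigma_algebra; left. Qed.

Lemma F_sub_Gfilt t : 0 <= t -> F t `<=` G t.
Proof.
move=> t0 A FA; apply: sub_sigma_algebra; right => s /= ts.
by apply: sub_sigma_algebra; left; exact: (hF_mono t0 (ltW ts) FA).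
Qed.

Lemma Gfilt_mono s t : s <= t -> G s `<=` G t.
Proof.
move=> st; apply: sub_sigma_algebra2 => A [NA|GA]; [by left | right].
by move=> u /= tu; apply: GA; apply: le_lt_trans tu.
Qed.

Lemma sys_inf_salg (H : R -> set_system Omega) : sigma_algebra setT (sys_inf H).
Proof. exact: smallest_sigma_algebra. Qed.

Lemma sub_sys_inf (H : R -> set_system Omega) t : 0 <= t -> H t `<=` sys_inf H.
Proof. by move=> t0 A HA; apply: sub_sigma_algebra; exists t. Qed.

Lemma S_ge0 w : (0 <= S w)%E. Proof. by case: hS. Qed.

Lemma fine_S_ge0 w : 0 <= fine (S w). Proof. by rewrite fine_ge0 ?S_ge0. Qed.

Lemma S_fin_num w : D w -> S w \is a fin_num.
Proof. by move=> Sw; rewrite ge0_fin_numE ?S_ge0. Qed.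

Lemma S_le_Gfilt t : 0 <= t -> G t [set w | (S w <= t%:E)%E].
Proof. by case: hS => _; apply. Qed.

Lemma S_lt_Gfilt r t : 0 <= t ->
  G t ([set w | (S w < r%:E)%E] `&` [set w | (S w <= t%:E)%E]).
Proof.
move=> t0; have [tr|rt] := leP r t; last first.
  rewrite setIidr; first exact: S_le_Gfilt.
  by move=> w /= Sw; apply: le_lt_trans Sw _; rewrite lte_fin.
rewrite setIidl; last by move=> w /= Sw; rewrite ltW // (lt_le_trans Sw) ?lee_fin.
have -> : [set w | (S w < r%:E)%E] =
    \bigcup_m [set w | (S w <= (r - (m.+1%:R)^-1)%:E)%E].
  apply/seteqP; split=> w /=.
    move=> Sr; have Sf : S w \is a fin_num by apply: S_fin_num; exact: lt_trans Sr (ltry _).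
    move: Sr; rewrite -(fineK Sf) lte_fin -subr_gt0 => /exists_inv_succ_lt[m hm].
    by exists m => //=; rewrite -(fineK Sf) lee_fin lerBrDr addrC -lerBrDr ltW.
  move=> [m _ /=] Sm; apply: le_lt_trans Sm _.
  by rewrite lte_fin ltrBlDr ltrDl invr_gt0 ltr0Sn.
apply: (salg_bigcup (Gfilt_salg t)) => m.
have [m0|m0] := leP 0 (r - (m.+1%:R)^-1).
  apply: Gfilt_mono (S_le_Gfilt m0).
  by rewrite lerBlDr (le_trans tr) // lerDl invr_ge0 ler0n.
rewrite (_ : [set w | _] = set0); first exact: salg0 (Gfilt_salg t).
apply/seteqP; split=> w //= Sw; have := le_trans (S_ge0 w) Sw.
by rewrite lee_fin leNgt m0.
Qed.

Lemma sys_at_stop_salg : sigma_algebra setT GS.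
Proof.
split.
- split; first exact: salg0 (sys_inf_salg G).
  by move=> t t0; rewrite set0I; exact: salg0 (Gfilt_salg t).
- move=> A [GA GAt]; split; first exact: salgCD (sys_inf_salg G) _ GA.
  move=> t t0; rewrite setTD.
  have -> : ~` A `&` [set w | (S w <= t%:E)%E] =
      [set w | (S w <= t%:E)%E] `\` (A `&` [set w | (S w <= t%:E)%E]).
    by rewrite setDIr setDv setU0 setDE setIC.
  by apply: (salgD (Gfilt_salg t)) => //; [apply: S_le_Gfilt | apply: GAt].
- move=> A GA; split; first by apply: (salg_bigcup (sys_inf_salg G)) => n; case: (GA n).
  move=> t t0; rewrite setI_bigcupl; apply: (salg_bigcup (Gfilt_salg t)) => n.
  by case: (GA n) => _; apply.
Qed.

Lemma S_eqy_sys_inf : sys_inf G [set w | S w = +oo%E].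
Proof.
rewrite -setT_bigcup_le_nat; apply: (salgCD (sys_inf_salg G)).
apply: (salg_bigcup (sys_inf_salg G)) => n.
exact: (sub_sys_inf (ler0n _ n) (S_le_Gfilt (ler0n _ n))).
Qed.

Lemma sys_at_stopP W :
  (forall t, 0 <= t -> G t (W `&` [set w | (S w <= t%:E)%E])) ->
  sys_inf G (W `&` [set w | S w = +oo%E]) -> GS W.
Proof.
move=> GWt GWy; split=> //.
have -> : W = (\bigcup_n (W `&` [set w | (S w <= n%:R%:E)%E])) `|`
              (W `&` [set w | S w = +oo%E]).
  by rewrite -setI_bigcupr -setIUr -setT_bigcup_le_nat setTD setUCr setIT.
apply: (salgU (sys_inf_salg G)) => //; apply: (salg_bigcup (sys_inf_salg G)) => n.
exact: (sub_sys_inf (ler0n _ n) (GWt _ (ler0n _ n))).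
Qed.

Lemma S_lty_sys_at_stop : GS D.
Proof.
apply: sys_at_stopP => [t t0|].
  by rewrite setIidr; [exact: S_le_Gfilt | move=> w /= Sw; exact: le_lt_trans Sw (ltry _)].
rewrite (_ : _ `&` _ = set0); first exact: salg0 (sys_inf_salg G).
by apply/seteqP; split=> w // [/= Sw Sy]; rewrite Sy ltxx in Sw.
Qed.

Lemma S_eqy_sys_at_stop : GS [set w | S w = +oo%E].
Proof.
apply: sys_at_stopP => [t t0|]; last by rewrite setIid; exact: S_eqy_sys_inf.
rewrite (_ : _ `&` _ = set0); first exact: salg0 (Gfilt_salg t).
by apply/seteqP; split=> w // [/= Sy]; rewrite Sy leNgt ltry.
Qed.

Lemma sys_at_stop_salgD : sigma_algebra D GS.
Proof. exact: salg_restrict sys_at_stop_salg S_lty_sys_at_stop. Qed.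

Definition S_cell (n j : nat) : set Omega :=
  [set w | (((n.+1%:R)^-1 * j%:R)%:E <= S w)%E] `&`
  [set w | (S w < ((n.+1%:R)^-1 * j.+1%:R)%:E)%E].

Lemma S_cellP n j w : D w -> S_cell n j w <-> Num.truncn (n.+1%:R * fine (S w)) = j.
Proof.
move=> Dw; rewrite /S_cell /= -[in X in X <-> _](fineK (S_fin_num Dw)) !lee_fin !lte_fin.
split=> [[jS Sj]|<-]; first by apply/eqP; rewrite -truncn_grid ?fine_S_ge0 // jS Sj.
by apply/andP; rewrite truncn_grid ?fine_S_ge0.
Qed.

Lemma S_cell_Gfilt n j t : 0 <= t ->
  G t ([set w | (S w <= t%:E)%E] `&` S_cell n j).
Proof.
move=> t0; set V := [set w | (S w <= t%:E)%E].
have -> : V `&` S_cell n j =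
    (V `\` ([set w | (S w < ((n.+1%:R)^-1 * j%:R)%:E)%E] `&` V)) `&`
    ([set w | (S w < ((n.+1%:R)^-1 * j.+1%:R)%:E)%E] `&` V).
  apply/seteqP; split=> w /=.
    by move=> [Vw [jS Sj]]; split; [split=> // -[]; rewrite ltNge jS | split].
  move=> [[Vw nSj] [Sj _]]; split=> //; split=> //=.
  by rewrite leNgt; apply/negP => Sj'; apply: nSj.
have hG := Gfilt_salg t.
apply: (salgI hG) => //; last exact: S_lt_Gfilt.
by apply: (salgD hG) => //; [exact: S_le_Gfilt | exact: S_lt_Gfilt].
Qed.

(* Discretisation of [S] from the right: the right end point of the cell of the
   grid of mesh [1/(n+1)] containing [S w], capped at [t]. *)
Definition S_approx (t : R) (n : nat) (w : Omega) : R :=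
  Num.min ((n.+1%:R)^-1 * (Num.truncn (n.+1%:R * fine (S w))).+1%:R) t.

Lemma S_approx_bounds t n w : (S w <= t%:E)%E ->
  fine (S w) <= S_approx t n w <= fine (S w) + (n.+1%:R)^-1.
Proof.
move=> St; have Sf : S w \is a fin_num by apply: S_fin_num; exact: le_lt_trans St (ltry _).
have St' : fine (S w) <= t by rewrite -lee_fin fineK.
have := truncn_grid n (Num.truncn (n.+1%:R * fine (S w))) (fine_S_ge0 w).
rewrite eqxx => /andP[jS Sj].
by rewrite /S_approx le_min (ltW Sj) St' ge_min -(natr1 (Num.truncn _)) mulrDr mulr1 lerD2r jS.
Qed.

Lemma cadlag_S_approx (X : R * Omega -> R) w t : cadlag X -> (S w <= t%:E)%E ->
  forall e, 0 < e -> exists N, forall n, (N <= n)%N ->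
    `|X (fine (S w), w) - X (S_approx t n w, w)| < e.
Proof.
move=> cX St e e0.
have [del del0 Xdel] := cvg_at_right_ball ((cX w).1 _ (fine_S_ge0 w)) e0.
have [N Ndel] := exists_inv_succ_lt del0.
exists N => n Nn; have /andP[Sapp appS] := S_approx_bounds n St.
have [->|neq] := eqVneq (S_approx t n w) (fine (S w)); first by rewrite subrr normr0.
apply: Xdel; first by rewrite lt_neqAle eq_sym neq Sapp.
by apply: (le_lt_trans appS); rewrite ltrD2l (le_lt_trans _ Ndel) // inv_succ_le.
Qed.

Lemma S_approx_lt_Gfilt (X : R * Omega -> R) n b t : adapted G X -> 0 <= t ->
  G t ([set w | (S w <= t%:E)%E] `&` [set w | X (S_approx t n w, w) < b]).
Proof.
move=> aX t0; set V := [set w | (S w <= t%:E)%E].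
pose c j := Num.min ((n.+1%:R)^-1 * j.+1%:R) t.
have -> : V `&` [set w | X (S_approx t n w, w) < b] =
    \bigcup_j ((V `&` S_cell n j) `&` [set w | X (c j, w) < b]).
  apply/seteqP; split=> w.
    move=> [Vw Xb]; have Dw : D w by exact: le_lt_trans Vw (ltry _).
    by exists (Num.truncn (n.+1%:R * fine (S w))) => //; split=> //; split=> //; apply/S_cellP.
  move=> [j _ [[Vw /S_cellP cellj] Xb]]; split=> //.
  by rewrite /= /S_approx cellj //; exact: le_lt_trans Vw (ltry _).
apply: (salg_bigcup (Gfilt_salg t)) => j.
apply: (salgI (Gfilt_salg t)) => //; first exact: S_cell_Gfilt.
have cj_ge0 : 0 <= c j by rewrite le_min t0 mulr_ge0 // invr_ge0 ler0n.
have cj_le : c j <= t by rewrite ge_min lexx orbT.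
apply: (Gfilt_mono cj_le).
have := aX _ cj_ge0 _ (measurable_itv `]-oo, b[).
by congr (G _ _); apply/seteqP; split=> w /=; rewrite in_itv.
Qed.

Lemma sys_at_stop_cadlag_lt (X : R * Omega -> R) a : cadlag X -> adapted G X ->
  GS (D `&` [set w | X (fine (S w), w) < a]).
Proof.
move=> cX aX; apply: sys_at_stopP => [t t0|]; last first.
  rewrite (_ : _ `&` _ = set0); first exact: salg0 (sys_inf_salg G).
  by apply/seteqP; split=> w // [[/= Sw _] Sy]; rewrite Sy ltxx in Sw.
set V := [set w | (S w <= t%:E)%E].
have -> : (D `&` [set w | X (fine (S w), w) < a]) `&` V =
    \bigcup_k \bigcup_N (setT `&` \bigcap_n
      (V `&` [set w | X (S_approx t (n + N) w, w) < a - (k.+1%:R)^-1])).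
  have XSP w : V w -> X (fine (S w), w) < a <->
      exists k N, forall n, X (S_approx t (n + N) w, w) < a - (k.+1%:R)^-1.
    by move=> Vw; exact: (@lt_approxP _ (fun n => X (S_approx t n w, w)) _ a
                            (cadlag_S_approx cX Vw)).
  apply/seteqP; split=> [w [[_ /= Xa] Vw]|w [k _ [N _ [_ XN]]]].
    have [k [N XN]] := (XSP w Vw).1 Xa.
    by exists k => //; exists N => //; split=> // n _; split=> //=.
  have Vw : V w by case: (XN 0%N I).
  split=> //; split; first exact: le_lt_trans Vw (ltry _).
  by apply/(XSP w Vw); exists k, N => n; case: (XN n I).
have hG := Gfilt_salg t.
apply: (salg_bigcup hG) => k; apply: (salg_bigcup hG) => N.
by apply: (salg_bigcap hG) => n; exact: S_approx_lt_Gfilt.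
Qed.

Lemma meas_wrt_cadlag_at_S (X : R * Omega -> R) : cadlag X -> adapted G X ->
  meas_wrt D GS (fun w => X (fine (S w), w)).
Proof.
move=> cX aX; apply: (meas_wrt_of_rays sys_at_stop_salgD) => a.
rewrite (_ : _ @^-1` _ = [set w | X (fine (S w), w) < a]); first exact: sys_at_stop_cadlag_lt.
by apply/seteqP; split=> w /=; rewrite in_itv.
Qed.

Lemma setI_Dom_at_S (E : set (R * Omega)) :
  D `&` [set w | (Dom `&` E) (fine (S w), w)] = D `&` [set w | E (fine (S w), w)].
Proof.
by apply/seteqP; split=> w /= [Dw]; [case | split=> //; split=> //; exact: fine_S_ge0].
Qed.

Lemma sys_at_stop_optional E : optional G E -> GS (D `&` [set w | E (fine (S w), w)]).
Proof.
suff : optional G `<=` [set E | GS (D `&` [set w | E (fine (S w), w)])] by apply.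
have hGS := sys_at_stop_salg; apply: smallest_sub.
  split=> /=.
  - rewrite (_ : _ `&` _ = set0); first exact: salg0 hGS.
    by apply/seteqP; split=> w // [].
  - move=> A GA.
    have -> : D `&` [set w | (Dom `\` A) (fine (S w), w)] =
        D `\` (D `&` [set w | A (fine (S w), w)]).
      apply/seteqP; split=> w /=; first by move=> [Dw [_ nA]]; split=> // -[].
      by move=> [Dw nA]; split=> //; split; [exact: fine_S_ge0 | move=> Aw; apply: nA].
    by apply: (salgD hGS) => //; exact: S_lty_sys_at_stop.
  - move=> A GA.
    rewrite (_ : _ `&` _ = \bigcup_n (D `&` [set w | A n (fine (S w), w)])).
      exact: (salg_bigcup hGS).
    apply/seteqP; split=> w /=; first by move=> [Dw [n _ An]]; exists n.
    by move=> [n _ [Dw An]]; split=> //; exists n.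
move=> _ [X [B [cX [aX [mB ->]]]]].
change (GS (D `&` [set w | (Dom `&` X @^-1` B) (fine (S w), w)])).
by rewrite setI_Dom_at_S; exact: (meas_wrt_cadlag_at_S cX aX mB).
Qed.

Lemma meas_wrt_optional_at_S (Y : R * Omega -> R) :
  meas_wrt Dom (optional G) Y -> meas_wrt D GS (fun w => Y (fine (S w), w)).
Proof.
by move=> mY B mB; have := sys_at_stop_optional (mY B mB); rewrite setI_Dom_at_S.
Qed.

Lemma optional_F_sub_G : optional F `<=` optional G.
Proof.
apply: sub_sigma_algebra2 => _ [X [B [cX [aX [mB ->]]]]].
exists X, B; split=> //; split=> // t t0 B' mB'.
exact: F_sub_Gfilt t0 _ (aX t t0 B' mB').
Qed.

Lemma Nsys_sub_sys_at_stop : Nsys Q F tau `<=` GS.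
Proof.
move=> A NA; split; first exact: sub_sys_inf (lexx 0) _ (Nsys_sub_Gfilt NA).
move=> t t0; apply: (salgI (Gfilt_salg t)) => //; last exact: S_le_Gfilt.
exact: Nsys_sub_Gfilt.
Qed.

(* On [{tau <= t}], [tau] coincides with [tau /\ s] for every [s > t]. *)
Lemma tau_le_Gfilt (B : set (\bar R)) t : measurable B -> 0 <= t ->
  G t ([set w | B (tau w)] `&` [set w | (tau w <= t%:E)%E]).
Proof.
move=> mB t0; apply: sub_sigma_algebra; right => s /= ts.
apply: sub_sigma_algebra; right; apply: sub_sigma_algebra.
exists (B `&` `]-oo, t%:E]); first by apply: measurableI => //; exact: emeasurable_itv.
apply/seteqP; split=> w /=; rewrite in_itv /=; have [taus|stau] := leP (tau w) s%:E => //.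
- by move=> [_]; rewrite lee_fin leNgt ts.
- by move=> [_ taut]; have := lt_le_trans stau taut; rewrite lte_fin ltNge (ltW ts).
Qed.

Lemma tau_le_S_Gfilt t : 0 <= t ->
  G t ([set w | (tau w <= S w)%E] `&` [set w | (S w <= t%:E)%E]).
Proof.
move=> t0; set V := [set w | (S w <= t%:E)%E].
pose grid m i : R := (m.+1%:R)^-1 * i%:R.
have -> : [set w | (tau w <= S w)%E] `&` V = setT `&` \bigcap_m \bigcup_i
   (([set w | `]-oo, (grid m i.+1)%:E[%classic (tau w)] `&` [set w | (tau w <= t%:E)%E])
    `&` (V `&` S_cell m i)).
  apply/seteqP; split=> w.
    move=> [tauS Vw]; have Dw : D w by exact: le_lt_trans Vw (ltry _).
    split=> // m _; exists (Num.truncn (m.+1%:R * fine (S w))) => //.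
    have /(S_cellP m _ Dw) cell := erefl (Num.truncn (m.+1%:R * fine (S w))).
    split; split=> //=; last exact: le_trans tauS Vw.
    by rewrite in_itv /=; apply: le_lt_trans tauS _; case: cell.
  move=> [_ cells]; have [i _ [[_ /= taut] [Vw _]]] := cells 0%N I.
  split=> //; rewrite leNgt; apply/negP => Stau.
  have Sf := S_fin_num (le_lt_trans Vw (ltry _)).
  have tauf : tau w \is a fin_num by rewrite ge0_fin_numE ?htau_ge0 // (le_lt_trans taut) ?ltry.
  have : 0 < fine (tau w) - fine (S w) by rewrite subr_gt0 -lte_fin !fineK.
  move=> /exists_inv_succ_lt[m mgap]; have [j _ [[/= tauj _] [_ [jS _]]]] := cells m I.
  move: tauj jS; rewrite in_itv /= -(fineK tauf) -(fineK Sf) !lte_fin lee_fin.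
  rewrite /grid -(natr1 j) mulrDr mulr1.
  move: mgap; move: ((m.+1%:R)^-1 * j%:R) => a; move: (m.+1%:R)^-1 => b.
  by clear Stau taut; lra.
have hG := Gfilt_salg t.
apply: (salg_bigcap hG) => m; apply: (salg_bigcup hG) => i.
apply: (salgI hG) => //; last exact: S_cell_Gfilt.
by apply: tau_le_Gfilt => //; exact: emeasurable_itv.
Qed.

Lemma tau_sys_inf (B : set (\bar R)) : measurable B -> sys_inf G [set w | B (tau w)].
Proof.
move=> mB; have hGi := sys_inf_salg G.
have tau_le n : sys_inf G ([set w | B (tau w)] `&` [set w | (tau w <= n%:R%:E)%E]) /\
                sys_inf G [set w | (tau w <= n%:R%:E)%E].
  split; apply: (sub_sys_inf (ler0n _ n)); first exact: tau_le_Gfilt.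
  by rewrite -[X in G _ X]setTI; exact: (tau_le_Gfilt measurableT).
have -> : [set w | B (tau w)] =
    \bigcup_n ([set w | B (tau w)] `&` [set w | (tau w <= n%:R%:E)%E]) `|`
    ([set _ | B +oo%E] `&` [set w | tau w = +oo%E]).
  apply/seteqP; split=> [w Bw|w [[n _ []] //|[/= + ->] //]].
  have [tauy|] := eqVneq (tau w) +oo%E; last first.
    by rewrite -ltey => /lty_le_nat[n taun]; left; exists n.
  by right; split=> //=; rewrite -tauy.
apply: (salgU hGi); first by apply: (salg_bigcup hGi) => n; case: (tau_le n).
apply: (salgI hGi) => //; first exact: salg_cst.
rewrite -setT_bigcup_le_nat; apply: (salgCD hGi).
by apply: (salg_bigcup hGi) => n; case: (tau_le n).
Qed.

Lemma tau_nmid_sys_at_stop (B : set (\bar R)) : measurable B ->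
  GS [set w | B (tau_nmid tau S w)].
Proof.
move=> mB; apply: sys_at_stopP => [t t0|]; last first.
  rewrite (_ : _ `&` _ = [set w | B (tau w)] `&` [set w | S w = +oo%E]).
    by apply: (salgI (sys_inf_salg G)) => //; [exact: tau_sys_inf | exact: S_eqy_sys_inf].
  by apply/seteqP; split=> w [Bw Sy]; split=> //; move: Bw; rewrite /tau_nmid /= Sy leey.
set V := [set w | (S w <= t%:E)%E]; set K := [set w | (tau w <= S w)%E] `&` V.
have -> : [set w | B (tau_nmid tau S w)] `&` V =
    (K `&` ([set w | B (tau w)] `&` [set w | (tau w <= t%:E)%E])) `|`
    ((V `\` K) `&` [set _ | B +oo%E]).
  apply/seteqP; split=> w; rewrite /tau_nmid /=.
    case: ifPn => tauS [Bw Vw]; first by left; split; split=> //; apply: le_trans tauS Vw.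
    by right; split=> //; split=> // -[tauS' _]; move: tauS; rewrite tauS'.
  move=> [[[tauS Vw] [Bw _]]|[[Vw nK] By]]; first by rewrite tauS.
  by case: ifPn => // tauS; exfalso; apply: nK.
have hG := Gfilt_salg t.
apply: (salgU hG).
  by apply: (salgI hG) => //; [exact: tau_le_S_Gfilt | exact: tau_le_Gfilt].
apply: (salgI hG) => //; last exact: salg_cst.
by apply: (salgD hG) => //; [exact: S_le_Gfilt | exact: tau_le_S_Gfilt].
Qed.

Lemma F_at_sub_sys_at_stop : F_at F S `<=` GS.
Proof.
apply: smallest_sub; first exact: sys_at_stop_salg.
move=> _ [_ [B [[X [mX ->]] [mB ->]]]].
have mXG : meas_wrt Dom (optional G) X by move=> B' mB'; apply: optional_F_sub_G; exact: mX.
rewrite (_ : _ @^-1` _ = (D `&` (fun w => X (fine (S w), w)) @^-1` B) `|`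
    ([set w | S w = +oo%E] `&` [set _ | B 0])).
  apply: (salgU sys_at_stop_salg); first exact: (meas_wrt_optional_at_S mXG mB).
  apply: (salgI sys_at_stop_salg) => //; first exact: S_eqy_sys_at_stop.
  exact: salg_cst sys_at_stop_salg.
apply/seteqP; split=> w; rewrite /preimage /=.
  have [Sy|] := ltP (S w) +oo%E; first by left.
  by rewrite leye_eq => /eqP Sy; right.
by move=> [[-> //]|[-> B0]]; rewrite ltxx.
Qed.

Lemma RHS_sub_sys_at_stop : RHS `<=` GS.
Proof.
have hGS := sys_at_stop_salg; apply: smallest_sub => // A [|]; last exact: F_at_sub_sys_at_stop.
move: A; apply: smallest_sub => // A [|]; first exact: Nsys_sub_sys_at_stop.
move: A; apply: smallest_sub => // _ [B mB <-].
exact: tau_nmid_sys_at_stop.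
Qed.

Definition late (A : set Omega) (c : R) (p : R * Omega) : R :=
  if `[< A p.2 /\ (S p.2 + c%:E <= p.1%:E)%E >] then 1 else 0.

Lemma late_eq1 A c p : late A c p = 1 <-> A p.2 /\ (S p.2 + c%:E <= p.1%:E)%E.
Proof.
rewrite /late; case: asboolP => [h|nh]; first by split.
split=> [h01|/nh //]; by move: (@oner_neq0 R); rewrite -h01 eqxx.
Qed.

Lemma late_cadlag A c : cadlag (late A c).
Proof.
move=> w; have [Aw|nAw] := pselect (A w).
  have lateE s : late A c (s, w) = step (S w + c%:E) s.
    rewrite /late /step /=.
    by case: asboolP => [[_ ->] //|nA]; case: ifPn => // hc; case: nA.
  split=> t t0; rewrite (funext lateE) ?lateE; [exact: step_cvg_right | exact: step_cvg_left].
have lateE s : late A c (s, w) = 0 by rewrite /late asboolF // => -[].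
by split=> t t0; rewrite (funext lateE) ?lateE; [exact: cvg_cst | exists 0; exact: cvg_cst].
Qed.

Lemma sys_at_stop_shift A c t : 0 <= c -> 0 <= t -> GS A ->
  G t (A `&` [set w | (S w + c%:E <= t%:E)%E]).
Proof.
move=> c0 t0 [_ GAt]; have [tc|ct] := leP 0 (t - c).
  rewrite (_ : [set w | _] = [set w | (S w <= (t - c)%:E)%E]).
    by apply: Gfilt_mono (GAt _ tc); rewrite lerBlDr lerDl.
  apply/seteqP; split=> w /=; have := S_ge0 w; case: (S w) => [s| |] //= _;
    by rewrite !lee_fin lerBrDr.
rewrite (_ : _ `&` _ = set0); first exact: salg0 (Gfilt_salg t).
apply/seteqP; split=> w // [_ /=]; have := S_ge0 w.
case: (S w) => [s| |] //=; rewrite !lee_fin => s0 sct.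
by move: ct; rewrite subr_lt0; lra.
Qed.

Lemma late_adapted A c : 0 <= c -> GS A -> adapted G (late A c).
Proof.
move=> c0 GA t t0 B mB; rewrite -(setTI (_ @^-1` B)).
apply: (meas_wrt_indic (Gfilt_salg t)) mB.
exact: sys_at_stop_shift.
Qed.

Lemma graph_setI_optional A : GS A -> optional G (graph S `&` [set p | A p.2]).
Proof.
move=> GA; have hO : sigma_algebra Dom (optional G) := smallest_sigma_algebra _ _.
have late_opt c : 0 <= c -> optional G (Dom `&` late A c @^-1` [set 1]).
  move=> c0; apply: sub_sigma_algebra; exists (late A c), [set 1].
  by split; [exact: late_cadlag | split; [exact: late_adapted | split]].
rewrite (_ : _ `&` _ = (Dom `&` late A 0 @^-1` [set 1]) `\`
    \bigcup_m (Dom `&` late A (m.+1%:R)^-1 @^-1` [set 1])).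
  apply: (salgD hO) => //; first exact: late_opt.
  by apply: (salg_bigcup hO) => m; apply: late_opt; rewrite invr_ge0 ler0n.
apply/seteqP; split=> -[t w] /=.
  move=> [[t0 tS] Aw]; split.
    by split=> //; apply/late_eq1; rewrite /= adde0 tS.
  move=> [m _ [_ /late_eq1[_ /= Sm]]].
  by have [_] := (ereal_eq_leP (S w) t).1 (esym tS); apply; exists m.
move=> [[t0 /late_eq1[/= Aw]]]; rewrite adde0 => St nlate.
split=> //; split=> //; apply/esym/ereal_eq_leP; split=> // -[m Sm].
by apply: nlate; exists m => //; split=> //; apply/late_eq1.
Qed.

Lemma graph_optional : optional G (graph S).
Proof.
rewrite -[graph S]setIT (_ : setT = [set p : R * Omega | setT p.2]) //.
exact: graph_setI_optional (salgT sys_at_stop_salg).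
Qed.

Lemma sigma_tau_Finf_salg : sigma_algebra setT (sigma_tau_Finf F tau).
Proof. exact: smallest_sigma_algebra. Qed.

Lemma sigma_tau_Finf_meas : sigma_tau_Finf F tau `<=` measurable.
Proof.
have hM := @sigma_algebra_measurable _ Omega.
apply: smallest_sub => // A [|]; move: A; apply: smallest_sub => //.
  by move=> _ [B mB <-]; rewrite -(setTI (tau @^-1` B)); exact: htau_meas.
by move=> A [t t0 FA]; exact: hF_meas t0 _ FA.
Qed.

Lemma null_bigcup (B : nat -> set Omega) : (forall k, sigma_tau_Finf F tau (B k)) ->
  (forall k, Q (B k) = 0%E) -> Q (\bigcup_k B k) = 0%E.
Proof.
move=> NB QB; apply/eqP; rewrite eq_le measure_ge0 andbT.
have mB k : measurable (B k) by exact: sigma_tau_Finf_meas.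
have : (Q (\bigcup_k B k) <= \sum_(k <oo) Q (B k))%E.
  exact: measure_sigma_subadditive (bigcupT_measurable _ mB) _.
by rewrite eseries0 // => k _ _; exact: QB.
Qed.

Definition split_at_S (A' : set (R * Omega)) (A'' : set (\bar R * (R * Omega)))
    (w : Omega) : Prop :=
  if ((fine (S w))%:E < tau w)%E then A' (fine (S w), w) else A'' (tau w, (fine (S w), w)).

Lemma split_at_S_setD A' A'' w :
  split_at_S (Dom `\` A') (Dom2 `\` A'') w <-> ~ split_at_S A' A'' w.
Proof.
rewrite /split_at_S; case: ifP => _ /=; split=> [[_ //]|nA]; split=> //.
  exact: fine_S_ge0.
by split; [exact: htau_ge0 | exact: fine_S_ge0].
Qed.

Lemma split_at_S_bigcup (A' : (set (R * Omega))^nat)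
    (A'' : (set (\bar R * (R * Omega)))^nat) w :
  split_at_S (\bigcup_n A' n) (\bigcup_n A'' n) w <-> exists n, split_at_S (A' n) (A'' n) w.
Proof. by rewrite /split_at_S; case: ifP => _; split=> -[n]; exists n. Qed.

Definition split_rep (C : set Omega) : Prop :=
  exists p : set (R * Omega) * set (\bar R * (R * Omega)) * set Omega,
  [/\ optional F p.1.1, prod_sys (optional F) p.1.2, sigma_tau_Finf F tau p.2,
      Q p.2 = 0%E &
      forall w, D w -> ~ p.2 w -> (C w <-> split_at_S p.1.1 p.1.2 w)].

Lemma split_rep_on_D C C' : D `&` C = D `&` C' -> split_rep C -> split_rep C'.
Proof.
move=> CC' [p [A'p A''p Np Qp Cp]]; exists p; split=> // w Dw nNw.
rewrite -Cp //; split=> Cw.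
  by have [] : (D `&` C) w by rewrite CC'.
by have [] : (D `&` C') w by rewrite -CC'.
Qed.

Lemma split_rep_salg : sigma_algebra setT split_rep.
Proof.
have hO : sigma_algebra Dom (optional F) := smallest_sigma_algebra _ _.
have hP : sigma_algebra Dom2 (prod_sys (optional F)) := smallest_sigma_algebra _ _.
split.
- exists (set0, set0, set0); split; [exact: salg0 hO | exact: salg0 hP |
    exact: salg0 sigma_tau_Finf_salg | exact: measure0 |].
  by move=> w _ _; rewrite /split_at_S; case: ifP.
- move=> A [[[A' A''] N] [A'p A''p Np Qp Ap]].
  exists (Dom `\` A', Dom2 `\` A'', N); split=> //=; [exact: salgCD hO _ A'p |
    exact: salgCD hP _ A''p |].
  move=> w Dw nNw; split=> [[_ nAw]|/split_at_S_setD nsplit].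
    by apply/split_at_S_setD => /(Ap _ Dw nNw).
  by split=> // /(Ap _ Dw nNw).
- move=> A /choice[p pA].
  exists (\bigcup_n (p n).1.1, \bigcup_n (p n).1.2, \bigcup_n (p n).2).
  split=> /=.
  + by apply: (salg_bigcup hO) => n; case: (pA n).
  + by apply: (salg_bigcup hP) => n; case: (pA n).
  + by apply: (salg_bigcup sigma_tau_Finf_salg) => n; case: (pA n).
  + by apply: null_bigcup => n; case: (pA n).
  move=> w Dw nNw.
  have An n : A n w <-> split_at_S (p n).1.1 (p n).1.2 w.
    by case: (pA n) => _ _ _ _; apply=> // Nw; apply: nNw; exists n.
  by split=> [[n _ /An An']|/split_at_S_bigcup[n /An]]; [apply/split_at_S_bigcup|]; exists n.
Qed.

Lemma tau_nmid_le w : (tau w <= S w)%E -> tau_nmid tau S w = tau w.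
Proof. by rewrite /tau_nmid => ->. Qed.

Lemma tau_nmid_gt w : (S w < tau w)%E -> tau_nmid tau S w = +oo%E.
Proof. by rewrite /tau_nmid ltNge => /negbTE ->. Qed.

Lemma tau_nmid_lty w : D w -> (tau_nmid tau S w < +oo)%E = (tau w <= S w)%E.
Proof.
rewrite /tau_nmid; case: ifPn => [tauS Dw|_ _]; last by rewrite ltxx.
exact: le_lt_trans tauS Dw.
Qed.

Lemma measurable_lty : measurable [set x : \bar R | (x < +oo)%E].
Proof.
rewrite (_ : [set x | _] = ~` [set +oo%E]); first exact/measurableC/emeasurable_set1.
by apply/seteqP; split=> x /=; rewrite ltey => /eqP.
Qed.

Lemma measurable_ge0 : measurable [set x : \bar R | (0 <= x)%E].
Proof.
rewrite (_ : [set x | _] = `[0%E, +oo[%classic); first exact: emeasurable_itv.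
by apply/seteqP; split=> x /=; rewrite in_itv /= andbT.
Qed.

Lemma RHS_salg : sigma_algebra setT RHS.
Proof. exact: smallest_sigma_algebra. Qed.

Lemma Nsys_sub_RHS : Nsys Q F tau `<=` RHS.
Proof. by move=> A NA; do 2 (apply: sub_sigma_algebra; left). Qed.

Lemma tau_nmid_RHS B : measurable B -> RHS [set w | B (tau_nmid tau S w)].
Proof.
move=> mB; apply: sub_sigma_algebra; left; apply: sub_sigma_algebra; right.
by apply: sub_sigma_algebra; exists B.
Qed.

Lemma F_at_RHS E : optional F E -> RHS (D `&` [set w | E (fine (S w), w)]).
Proof.
move=> OE; pose X p : R := if `[< E p >] then 1 else 0.
pose f w := if (S w < +oo)%E then X (fine (S w), w) else 0.
rewrite (_ : _ `&` _ = f @^-1` [set 1]).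
  apply: sub_sigma_algebra; right; apply: sub_sigma_algebra; exists f, [set 1].
  split; last by split.
  by exists X; split=> //; exact: meas_wrt_indic (smallest_sigma_algebra _ _) OE.
have ne01 : (0 : R) <> 1 by move/eqP; rewrite eq_sym oner_eq0.
apply/seteqP; split=> w; rewrite /preimage /f /X /=.
  by move=> [-> Ew]; rewrite asboolT.
by case: ifPn => // Dw; case: asboolP.
Qed.

Lemma S_lty_RHS : RHS D.
Proof.
have := F_at_RHS (salgT (smallest_sigma_algebra Dom _) : optional F Dom).
by rewrite setIidl // => w _; exact: fine_S_ge0.
Qed.

Lemma prod_sys_at_S_RHS E : prod_sys (optional F) E ->
  RHS (D `&` [set w | (tau w <= S w)%E /\ E (tau w, (fine (S w), w))]).
Proof.
pose at_S E := D `&` [set w | (tau w <= S w)%E /\ E (tau w, (fine (S w), w))].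
suff : prod_sys (optional F) `<=` [set E | RHS (at_S E)] by apply.
apply: smallest_sub.
  split=> /=.
  - rewrite (_ : at_S _ = set0); first exact: salg0 RHS_salg.
    by apply/seteqP; split=> w // [_ []].
  - move=> A RA; have -> : at_S (Dom2 `\` A) =
        (D `&` [set w | (tau_nmid tau S w < +oo)%E]) `\` at_S A.
      apply/seteqP; split=> w /=.
        by move=> [Dw [tauS [_ nA]]]; split; [rewrite tau_nmid_lty | case=> _ []].
      move=> [[Dw]]; rewrite tau_nmid_lty // => tauS nA; split=> //; split=> //.
      by split; [split; [exact: htau_ge0 | exact: fine_S_ge0] | move=> Aw; apply: nA].
    apply: (salgD RHS_salg) => //; apply: (salgI RHS_salg) => //.
      exact: S_lty_RHS.
    exact: tau_nmid_RHS measurable_lty.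
  - move=> A RA; rewrite (_ : at_S _ = \bigcup_n at_S (A n)).
      exact: (salg_bigcup RHS_salg).
    apply/seteqP; split=> w /=; first by move=> [Dw [tauS [n _ An]]]; exists n.
    by move=> [n _ [Dw [tauS An]]]; split=> //; split=> //; exists n.
move=> _ [A0 [B [mA0 [A0ge0 [OB ->]]]]] /=.
rewrite (_ : at_S _ = [set w | (A0 `&` [set x | (x < +oo)%E]) (tau_nmid tau S w)] `&`
    (D `&` [set w | B (fine (S w), w)])).
  apply: (salgI RHS_salg) => //; last exact: F_at_RHS.
  by apply: tau_nmid_RHS; apply: measurableI => //; exact: measurable_lty.
apply/seteqP; split=> w /=.
  move=> [Dw [tauS [A0w Bw]]]; rewrite tau_nmid_le //.
  by split=> //; split=> //; exact: le_lt_trans tauS Dw.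
move=> [[+ tauy] [Dw Bw]]; rewrite tau_nmid_lty // in tauy.
by rewrite tau_nmid_le.
Qed.

Definition split_set (A' : set (R * Omega)) (A'' : set (\bar R * (R * Omega))) : set Omega :=
  ([set w | tau_nmid tau S w = +oo%E] `&` (D `&` [set w | A' (fine (S w), w)])) `|`
  (D `&` [set w | (tau w <= S w)%E /\ A'' (tau w, (fine (S w), w))]).

Lemma split_setE A' A'' w : D w -> split_at_S A' A'' w <-> split_set A' A'' w.
Proof.
move=> Dw; rewrite /split_at_S /split_set /= fineK ?S_fin_num //.
case: ltP => [Stau|tauS].
  by rewrite tau_nmid_gt //; split=> [A'w|[[_ [_ //]]|[_ []] //]]; left.
rewrite tau_nmid_le //; split=> [A''w|[[tauy _]|[_ [_ //]]]]; first by right.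
by have := le_lt_trans tauS Dw; rewrite tauy ltxx.
Qed.

Lemma split_set_RHS A' A'' : optional F A' -> prod_sys (optional F) A'' ->
  RHS (split_set A' A'').
Proof.
move=> OA' PA''; apply: (salgU RHS_salg); last exact: prod_sys_at_S_RHS.
apply: (salgI RHS_salg) => //; last exact: F_at_RHS.
exact: tau_nmid_RHS (emeasurable_set1 _).
Qed.

Lemma RHS_of_split_rep C : split_rep C -> exists2 C', RHS C' & D `&` C = D `&` C'.
Proof.
move=> [[[A' A''] N] [OA' PA'' NN QN CA]] /=.
have Nsys_subN E : E `<=` N -> Nsys Q F tau E by move=> EN; apply: sub_sigma_algebra; exists N.
exists ((split_set A' A'' `\` N) `|` (C `&` N)).
  apply: (salgU RHS_salg); last exact: Nsys_sub_RHS _ (Nsys_subN _ (@subIsetr _ C N)).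
  apply: (salgD RHS_salg) => //; last exact: Nsys_sub_RHS _ (Nsys_subN _ (@subset_refl _ N)).
  exact: split_set_RHS.
suff CC' w : D w -> C w <-> ((split_set A' A'' `\` N) `|` (C `&` N)) w.
  by apply/seteqP; split=> w [Dw Cw]; split=> //; exact/(CC' w Dw).
move=> Dw; have [Nw|nNw] := pselect (N w).
  by split=> [Cw|[[_ /(_ Nw) []]|[]]]; [right|].
split=> [/(CA w Dw nNw)/(split_setE _ _ Dw) SAw|[[/(split_setE _ _ Dw)/(CA w Dw nNw)//]|[]]].
  by left.
by move=> _ /nNw.
Qed.

Lemma split_rep_F_at : F_at F S `<=` split_rep.
Proof.
apply: smallest_sub; first exact: split_rep_salg.
move=> _ [f [B [[X [mX ->]] [mB ->]]]].
exists (Dom `&` X @^-1` B, [set x | (0 <= x)%E] `*` (Dom `&` X @^-1` B), set0).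
split=> //; [exact: mX | | exact: salg0 sigma_tau_Finf_salg | exact: measure0 |].
  apply: sub_sigma_algebra; exists [set x | (0 <= x)%E], (Dom `&` X @^-1` B).
  by split; [exact: measurable_ge0 | split=> //; split=> //; exact: mX].
move=> w Dw _; rewrite /preimage /split_at_S /= Dw.
case: ifP => _; split=> [XB|[]]; last by move=> _ [].
- by split=> //; exact: fine_S_ge0.
- by [].
- by split; [exact: htau_ge0 | split=> //; exact: fine_S_ge0].
Qed.

Lemma split_rep_Nsys : Nsys Q F tau `<=` split_rep.
Proof.
apply: smallest_sub; first exact: split_rep_salg.
move=> E [B [NB [QB EB]]]; exists (set0, set0, B).
split=> //; [exact: salg0 (smallest_sigma_algebra _ _) |
  exact: salg0 (smallest_sigma_algebra _ _) |].
by move=> w Dw nBw; rewrite /split_at_S; case: ifP => _; split=> // /EB.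
Qed.

Lemma split_rep_tau_nmid : sigma_rv (tau_nmid tau S) `<=` split_rep.
Proof.
have hO : sigma_algebra Dom (optional F) := smallest_sigma_algebra _ _.
apply: smallest_sub; first exact: split_rep_salg.
move=> _ [B mB <-].
exists (Dom `&` [set _ | B +oo%E], (B `&` [set x | (0 <= x)%E]) `*` Dom, set0).
split=> //.
- have [By|nBy] := pselect (B +oo%E); last first.
    by rewrite (_ : _ `&` _ = set0); [exact: salg0 hO | apply/seteqP; split=> x // []].
  by rewrite setIidl; [exact: salgT hO | move=> x].
- apply: sub_sigma_algebra; exists (B `&` [set x | (0 <= x)%E]), Dom.
  split; first by apply: measurableI => //; exact: measurable_ge0.
  by split; [exact: subIsetr | split=> //; exact: salgT hO].
- exact: salg0 sigma_tau_Finf_salg.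
- exact: measure0.
move=> w Dw _; rewrite /split_at_S /= fineK ?S_fin_num //; case: ifPn => [Stau|].
  rewrite tau_nmid_gt //; split=> [By|[]//]; split=> //; exact: fine_S_ge0.
rewrite -leNgt => tauS; rewrite tau_nmid_le //; split=> [Btau|[[]]//].
by split; [split=> //; exact: htau_ge0 | exact: fine_S_ge0].
Qed.

Lemma split_rep_of_RHS : RHS `<=` split_rep.
Proof.
have hrep := split_rep_salg.
apply: smallest_sub => // A [|]; last exact: split_rep_F_at.
move: A; apply: smallest_sub => // A [|]; [exact: split_rep_Nsys | exact: split_rep_tau_nmid].
Qed.

Lemma split_rep_of_Lo : Lo Q F tau (graph S) -> forall A, GS A -> split_rep A.
Proof.
move=> [_ [_ osf_graph]] A GA.
pose Y p : R := if `[< (graph S `&` [set p | A p.2]) p >] then 1 else 0.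
have mY : meas_wrt Dom (optional G) Y.
  exact: meas_wrt_indic (smallest_sigma_algebra _ _) (graph_setI_optional GA).
have [Y' [Y'' [mY' [mY'' [N [NN [QN YN]]]]]]] := osf_graph Y mY.
exists (Dom `&` Y' @^-1` [set 1], Dom2 `&` Y'' @^-1` [set 1], N).
split=> //; [exact: mY' (measurable_set1 1) | exact: mY'' (measurable_set1 1) |].
move=> w Dw nNw /=.
have graphS : graph S (fine (S w), w).
  by split; [exact: fine_S_ge0 | rewrite /= fineK //; exact: S_fin_num].
have YA : A w <-> Y (fine (S w), w) = 1.
  rewrite /Y; case: asboolP => [[_ //]|nA]; split=> // [Aw|/esym/eqP].
    by exfalso; apply: nA.
  by rewrite oner_eq0.
have YS : Y (fine (S w), w) = if ((fine (S w))%:E < tau w)%E then Y' (fine (S w), w)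
                               else Y'' (tau w, (fine (S w), w)).
  by apply: contrapT => neq; apply/nNw/YN; exists (fine (S w)).
apply: iff_trans YA _; rewrite YS /split_at_S; case: ifPn => _ /=.
  by split=> [->|[]//]; split=> //; exact: fine_S_ge0.
by split=> [->|[]//]; split=> //; split; [exact: htau_ge0 | exact: fine_S_ge0].
Qed.

(* [Y'] and [Y''] are recovered from the representations of the sets
   [{Y_S < q}], [q] rational, as infima over the rationals. *)
Lemma Lo_of_split_rep : (forall A, GS A -> split_rep A) -> Lo Q F tau (graph S).
Proof.
move=> rep; split; first exact: graph_optional.
split=> [p []//|Y mY].
have repY k : split_rep (D `&` [set w | Y (fine (S w), w) < rat_enum R k]).
  apply: rep; have := meas_wrt_optional_at_S mY (measurable_itv `]-oo, rat_enum R k[).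
  by congr GS; apply/seteqP; split=> w /=; rewrite in_itv.
have /choice[p pY] := repY.
exists (fine \o rat_inf R (fun k => (p k).1.1)), (fine \o rat_inf R (fun k => (p k).1.2)).
split; first by apply: meas_wrt_rat_inf (smallest_sigma_algebra _ _) _ => k; case: (pY k).
split; first by apply: meas_wrt_rat_inf (smallest_sigma_algebra _ _) _ => k; case: (pY k).
exists (\bigcup_k (p k).2).
split; first by apply: (salg_bigcup sigma_tau_Finf_salg) => k; case: (pY k).
split; first by apply: null_bigcup => k; case: (pY k).
move=> w [t [[t0 tS] Ysplit]]; apply: contrapT => nNw; apply: Ysplit.
have Dw : D w by rewrite /= -tS ltry.
have St : fine (S w) = t by rewrite -tS.
have YE k : Y (t, w) < rat_enum R k <-> split_at_S (p k).1.1 (p k).1.2 w.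
  case: (pY k) => _ _ _ _ /(_ w Dw (fun Nw => nNw (ex_intro2 _ _ k I Nw))).
  by rewrite -St => YE; split=> [Yk|/YE[] //]; apply/YE.
rewrite /split_at_S St in YE; case: ifPn => tau_t /=.
  by rewrite (rat_inf_eq (y := Y (t, w))) // => k; rewrite tau_t in YE; split=> /YE.
by rewrite (rat_inf_eq (y := Y (t, w))) // => k; rewrite (negbTE tau_t) in YE; split=> /YE.
Qed.

Lemma Lo_graphP : Lo Q F tau (graph S) <-> forall A, GS A -> split_rep A.
Proof. by split; [exact: split_rep_of_Lo | exact: Lo_of_split_rep]. Qed.

Lemma trace_RHS_split_repP :
  trace D GS = trace D RHS <-> forall A, GS A -> split_rep A.
Proof.
split=> [trE A GA|rep].
  have : trace D RHS (D `&` A) by rewrite -trE; exists A.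
  by move=> [C RC DC]; exact: split_rep_on_D DC (split_rep_of_RHS RC).
apply/seteqP; split=> _ [A GA <-].
  by have [C RC ->] := RHS_of_split_rep (rep A GA); exists C.
by exists A => //; exact: RHS_sub_sys_at_stop.
Qed.

End Model.

Theorem mainTheorem7 (R : realType) (d : measure_display)
  (Omega : measurableType d) (Q : probability Omega R)
  (F : R -> set_system Omega) (tau : Omega -> \bar R) (S : Omega -> \bar R)
  (hF_sigma : forall t : R, 0 <= t -> sigma_algebra setT (F t))
  (hF_meas : forall t : R, 0 <= t -> F t `<=` measurable)
  (hF_mono : forall s t : R, 0 <= s -> s <= t -> F s `<=` F t)
  (hF_rc : forall t : R, 0 <= t ->
     F t = \bigcap_(s in [set s : R | t < s]) F s)
  (hF0 : negl_sys Q (sys_inf F) `<=` F 0)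
  (htau_pos : forall w, (0 <= tau w)%E)
  (htau_meas : measurable_fun setT tau)
  (hS : stopping_time (Gfilt Q F tau) S) :
  Lo Q F tau (graph S) <->
  trace [set w | (S w < +oo)%E] (sys_at_stop (Gfilt Q F tau) S) =
  trace [set w | (S w < +oo)%E]
    (sjoin (sjoin (Nsys Q F tau) (sigma_rv (tau_nmid tau S))) (F_at F S)).
Proof.
apply: iff_trans (Lo_graphP hF_meas htau_pos htau_meas hS) _.
exact: iff_sym (trace_RHS_split_repP hF_meas hF_mono htau_pos htau_meas hS).
Qed.
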